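(* Let $C\subset\mathbb R^3$ be an embedded curve (closed or non-closed) with nowhere vanishing curvature, and let $F,G\in\mathcal D(|C|)$ be developable strips written in normal forms. Then $F(\Omega^+_\epsilon)\cap G(\Omega^-_\epsilon)=\emptyset$ for all sufficiently small $\epsilon>0$.
   Context: $C$ has length $l>0$ and an orientation; $-C$ is $C$ with opposite orientation. $J=[-l/2,l/2]$ if $C$ is non-closed and $J=\mathbb R/l\mathbb Z$ if $C$ is closed. $\Omega^+_\epsilon:=J\times(0,\epsilon)$, $\Omega^-_\epsilon:=J\times(-\epsilon,0)$. A developable strip along $C$ is the germ of a $C^\infty$ embedding $f(u,v)=f(u,0)+v\,\xi_f(u)$ with $\mathbf c_f(u)=f(u,0)$ parametrizing $C$, $\xi_f$ a unit vector field, and zero Gaussian curvature; with the Frenet frame $(\mathbf e,\mathbf n,\mathbf b)$ of $\mathbf c_f$ write $\xi_f=\cos\beta_f\,\mathbf e+\sin\beta_f(\cos\alpha_f\,\mathbf n+\sin\alpha_f\,\mathbf b)$. $\mathcal D(C)$: strips with $\mathbf c_f$ inducing the orientation of $C$ and $0<|\cos\alpha_f|<1$, normalized so $0<|\alpha_f|<\pi/2$, $0<\beta_f<\pi$ (hence $\xi_f\cdot\mathbf n>0$). $\mathcal D(|C|):=\mathcal D(C)\cup\mathcal D(-C)$. A normal form is such a strip $F(s,v)$ defined near $J\times\{0\}$ with $s\mapsto F(s,0)$ an arc-length parametrization of $C$ and $\partial_vF(s,0)=\xi_F(s)$. *)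

From Stdlib Require Import Reals Lra ZArith List.
From Coquelicot Require Import Coquelicot.
Open Scope R_scope.

Definition vec3 := (R * R * R)%type.
Definition mkv (a b c : R) : vec3 := (a, b, c).
Definition vx (p : vec3) : R := fst (fst p).
Definition vy (p : vec3) : R := snd (fst p).
Definition vz (p : vec3) : R := snd p.
Definition vzero : vec3 := mkv 0 0 0.
Definition vadd (p q : vec3) : vec3 := mkv (vx p + vx q) (vy p + vy q) (vz p + vz q).
Definition vscale (a : R) (p : vec3) : vec3 := mkv (a * vx p) (a * vy p) (a * vz p).
Definition vsub (p q : vec3) : vec3 := vadd p (vscale (-1) q).
Definition dot (p q : vec3) : R := vx p * vx q + vy p * vy q + vz p * vz q.
Definition cross (p q : vec3) : vec3 :=
  mkv (vy p * vz q - vz p * vy q) (vz p * vx q - vx p * vz q) (vx p * vy q - vy p * vx q).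
Definition vnorm (p : vec3) : R := sqrt (dot p p).

Definition Dv (f : R -> vec3) (t : R) : vec3 :=
  mkv (Derive (fun s => vx (f s)) t) (Derive (fun s => vy (f s)) t)
      (Derive (fun s => vz (f s)) t).
Definition pu (F : R -> R -> vec3) (u v : R) : vec3 := Dv (fun t => F t v) u.
Definition pv (F : R -> R -> vec3) (u v : R) : vec3 := Dv (fun t => F u t) v.

(** iterated partial derivatives of a scalar function of two variables;
    [true] = d/du, [false] = d/dv *)
Fixpoint pder (l : list bool) (g : R -> R -> R) : R -> R -> R :=
  match l with
  | nil => g
  | cons b l' =>
      if b then (fun u v => Derive (fun t => pder l' g t v) u)
      else (fun u v => Derive (fun t => pder l' g u t) v)
  end.

Definition smooth2_scalar (U : R -> R -> Prop) (g : R -> R -> R) : Prop :=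
  forall (l : list bool) (u v : R), U u v ->
    ex_derive (fun t => pder l g t v) u /\
    ex_derive (fun t => pder l g u t) v /\
    continuous (fun p : R * R => pder l g (fst p) (snd p)) (u, v).

Definition smooth2 (U : R -> R -> Prop) (F : R -> R -> vec3) : Prop :=
  smooth2_scalar U (fun u v => vx (F u v)) /\
  smooth2_scalar U (fun u v => vy (F u v)) /\
  smooth2_scalar U (fun u v => vz (F u v)).

Definition unit_normal (F : R -> R -> vec3) (u v : R) : vec3 :=
  let c := cross (pu F u v) (pv F u v) in vscale (/ vnorm c) c.
Definition gauss_curv (F : R -> R -> vec3) (u v : R) : R :=
  let nu := unit_normal F u v in
  let E := dot (pu F u v) (pu F u v) in
  let Ff := dot (pu F u v) (pv F u v) in
  let G := dot (pv F u v) (pv F u v) in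
  let L := dot (pu (pu F) u v) nu in
  let M := dot (pu (pv F) u v) nu in
  let N := dot (pv (pv F) u v) nu in
  (L * N - M ^ 2) / (E * G - Ff ^ 2).

Definition tang (c : R -> vec3) (s : R) : vec3 := vscale (/ vnorm (Dv c s)) (Dv c s).
Definition nrm (c : R -> vec3) (s : R) : vec3 :=
  vscale (/ vnorm (Dv (tang c) s)) (Dv (tang c) s).
Definition binrm (c : R -> vec3) (s : R) : vec3 := cross (tang c s) (nrm c s).
Definition curvature (c : R -> vec3) (s : R) : R :=
  vnorm (Dv (tang c) s) / vnorm (Dv c s).

(** * The parameter domain J: [-l/2, l/2] (non-closed) or R/lZ (closed,
    represented by l-periodic data on R) *)
Definition Jdom (closed : bool) (l s : R) : Prop :=
  if closed then True else - (l / 2) <= s <= l / 2.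

Definition same_J (closed : bool) (l u u' : R) : Prop :=
  if closed then exists k : Z, u' = u + IZR k * l else u' = u.
Definition near_J (closed : bool) (l u u' eps : R) : Prop :=
  if closed then exists k : Z, Rabs (u' - u - IZR k * l) < eps
  else Rabs (u' - u) < eps.

(** * The curve C, given by an arc-length parametrization gamma inducing its
    orientation; C = gamma(J), of length l. *)
Definition embedded_curve (closed : bool) (l : R) (gamma : R -> vec3) : Prop :=
  0 < l /\
  (forall (n : nat) (t : R),
      ex_derive_n (fun s => vx (gamma s)) n t /\
      ex_derive_n (fun s => vy (gamma s)) n t /\
      ex_derive_n (fun s => vz (gamma s)) n t) /\
  (forall t, vnorm (Dv gamma t) = 1) /\
  (if closed then
     (forall t, gamma (t + l) = gamma t) /\
     (forall s t, 0 <= s < l -> 0 <= t < l -> gamma s = gamma t -> s = t)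
   else
     (forall s t, Jdom closed l s -> Jdom closed l t -> gamma s = gamma t -> s = t)).

(** * Developable strips (germ along J x {0}): F(u,v) = F(u,0) + v xi(u),
    a smooth embedding of a neighbourhood of J x {0}, xi unit, K = 0. *)
Definition dev_strip (closed : bool) (l : R) (F : R -> R -> vec3) (xi : R -> vec3)
  : Prop :=
  exists eta delta : R, 0 < eta /\ 0 < delta /\
  let U := fun u v : R =>
     (if closed then True else - (l / 2) - eta < u < l / 2 + eta) /\
     - delta < v < delta in
  smooth2 U F /\
  (closed = true -> forall u v, F (u + l) v = F u v) /\
  (forall u v, U u v -> cross (pu F u v) (pv F u v) <> vzero) /\
  (forall u v u' v', U u v -> U u' v' -> F u v = F u' v' ->
      v' = v /\ same_J closed l u u') /\
  (forall u v, U u v -> forall eps, 0 < eps -> exists d, 0 < d /\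
      forall u' v', U u' v' -> vnorm (vsub (F u' v') (F u v)) < d ->
        Rabs (v' - v) < eps /\ near_J closed l u u' eps) /\
  (forall u v, U u v -> F u v = vadd (F u 0) (vscale v (xi u))) /\
  (forall u v, U u v -> vnorm (xi u) = 1) /\
  (forall u v, U u v -> gauss_curv F u v = 0).

(** * F is a normal form of an element of D(C) (o = 1) or D(-C) (o = -1):
    s |-> F(s,0) is an arc-length parametrization of C inducing the
    orientation of C (resp. -C), and
    xi = cos b e + sin b (cos a n + sin a b) with 0<|a|<pi/2, 0<b<pi. *)
Definition normal_form_D (closed : bool) (l : R) (gamma : R -> vec3) (o : R)
  (F : R -> R -> vec3) : Prop :=
  exists xi : R -> vec3,
    dev_strip closed l F xi /\
    (exists s0 : R, (closed = false -> s0 = 0) /\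
       forall s, Jdom closed l s -> F s 0 = gamma (s0 + o * s)) /\
    (let c := fun s => F s 0 in
     exists alpha beta : R -> R, forall s, Jdom closed l s ->
       xi s = vadd (vscale (cos (beta s)) (tang c s))
                   (vscale (sin (beta s))
                      (vadd (vscale (cos (alpha s)) (nrm c s))
                            (vscale (sin (alpha s)) (binrm c s)))) /\
       0 < Rabs (alpha s) < PI / 2 /\ 0 < beta s < PI).

Definition normal_form_Dabs (closed : bool) (l : R) (gamma : R -> vec3)
  (F : R -> R -> vec3) : Prop :=
  normal_form_D closed l gamma 1 F \/ normal_form_D closed l gamma (-1) F.

(* Write [F s v = gamma a + v xi] and [G t w = gamma b + w eta] with [a, b] the
   parameters of the feet of the rulings.  Since [0 < |alpha| < pi/2] and
   [0 < beta < pi], every ruling has the positive component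
   [sin beta cos alpha |gamma''|] along the curvature vector [gamma''], and by
   compactness this component is at least some [m > 0] uniformly near the foot.
   If [F s v = G t w] with [v > 0 > w], then [|gamma a - gamma b| <= v - w], so by
   embeddedness and compactness [b] may be replaced by a parameter of the same
   point close to [a], and then [|a - b| <= 2 (v - w)].  Projecting
   [gamma a - gamma b = w eta - v xi] on [gamma'' b], Taylor's formula and
   [gamma' b . gamma'' b = 0] give [m (v - w) <= M^2 |a - b|^2 <= 4 M^2 (v - w)^2]
   with [M] a bound of [|gamma''|], which fails as soon as [v - w < m / (4 M^2)]. *)

From Stdlib Require Import Reals Lra Lia ZArith Classical FunctionalExtensionality.
From Coquelicot Require Import Coquelicot.
Open Scope R_scope.

(** * Real analysis *)

Lemma uniform_on_interval (lo hi : R) (P : R -> R -> Prop) :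
  (forall a r r', 0 < r' <= r -> P a r -> P a r') ->
  (forall a, lo <= a <= hi -> exists r, 0 < r /\ exists rho, 0 < rho /\
      forall a', lo <= a' <= hi -> Rabs (a' - a) < r -> P a' rho) ->
  exists rho, 0 < rho /\ forall a, lo <= a <= hi -> P a rho.
Proof.
  intros Hmon Hloc.
  destruct (Rlt_or_le hi lo) as [Hlt|Hle].
  { exists 1; split; [lra|]; intros a Ha; lra. }
  set (S := fun x => lo <= x <= hi /\
              exists rho, 0 < rho /\ forall a, lo <= a <= x -> P a rho).
  assert (HS0 : S lo).
  { destruct (Hloc lo) as [r [Hr [rho [Hrho H]]]]; [lra|].
    split; [lra|]. exists rho; split; auto. intros a Ha. apply H; [lra|].
    replace (a - lo) with 0 by lra. rewrite Rabs_R0; lra. }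
  assert (Hb : bound S) by (exists hi; intros x [Hx _]; lra).
  destruct (completeness S Hb (ex_intro _ lo HS0)) as [sup [Hub Hlub]].
  assert (Hsup : lo <= sup <= hi).
  { split; [apply Hub; auto | apply Hlub; intros x [Hx _]; lra]. }
  destruct (Hloc sup Hsup) as [r [Hr [rs [Hrs Hs]]]].
  (* Every point of [lo, hi] left of [sup + r] is covered: combine a witness
     of [S] beyond [sup - r] with the neighbourhood of [sup]. *)
  assert (Hcover : forall y, lo <= y <= hi -> y < sup + r ->
            exists rho, 0 < rho /\ forall a, lo <= a <= y -> P a rho).
  { intros y Hy Hyr.
    assert (Hex : exists x, S x /\ sup - r < x).
    { apply NNPP; intros Hno.
      assert (sup <= sup - r); [|lra].
      apply Hlub. intros x Hx. destruct (Rle_or_lt x (sup - r)); auto.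
      exfalso; apply Hno; exists x; auto. }
    destruct Hex as [x [[Hx [rx [Hrx Hpx]]] Hxr]].
    exists (Rmin rx rs). split; [apply Rmin_pos; auto|]. intros a Ha.
    destruct (Rle_or_lt a x).
    - apply Hmon with rx; [split; [apply Rmin_pos; auto | apply Rmin_l]|].
      apply Hpx; lra.
    - apply Hmon with rs; [split; [apply Rmin_pos; auto | apply Rmin_r]|].
      apply Hs; [lra|]. unfold Rabs; destruct Rcase_abs; lra. }
  destruct (Rlt_or_le sup hi) as [Hl|Hl].
  - exfalso. set (y := Rmin hi (sup + r / 2)).
    assert (Hy1 : y <= hi) by apply Rmin_l.
    assert (Hy3 : sup < y) by (unfold y; apply Rmin_glb_lt; lra).
    assert (Hy2 : y <= sup + r / 2) by apply Rmin_r.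
    assert (S y) by (split; [lra|]; apply Hcover; lra).
    assert (y <= sup) by (apply Hub; auto). lra.
  - apply Hcover; lra.
Qed.

Lemma ex_derive_continuity_pt (f : R -> R) (x : R) :
  ex_derive f x -> continuity_pt f x.
Proof. intros H. apply continuity_pt_filterlim, (ex_derive_continuous f x H). Qed.

Lemma continuity_pt_eps (f : R -> R) (x : R) : continuity_pt f x ->
  forall e, 0 < e -> exists d, 0 < d /\
    forall y, Rabs (y - x) < d -> Rabs (f y - f x) < e.
Proof.
  intros H e He. destruct (H e He) as [d [Hd Hf]]. exists d; split; auto.
  intros y Hy. destruct (Req_dec y x) as [->|Hne].
  - rewrite Rminus_diag, Rabs_R0; auto.
  - apply (Hf y). repeat split; auto.
Qed.

Lemma MVT_Rabs_le (f f' : R -> R) (a b M : R) :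
  (forall x, Rmin a b <= x <= Rmax a b -> is_derive f x (f' x) /\ Rabs (f' x) <= M) ->
  Rabs (f a - f b) <= M * Rabs (a - b).
Proof.
  intros H. rewrite Rmin_comm, Rmax_comm in H.
  destruct (MVT_gen f b a f') as [c [Hc ->]].
  - intros x Hx. apply H; lra.
  - intros x Hx. apply ex_derive_continuity_pt. exists (f' x). apply H; lra.
  - rewrite Rabs_mult. apply Rmult_le_compat_r; [apply Rabs_pos | apply H, Hc].
Qed.

Lemma taylor1_Rabs_le (f f' f'' : R -> R) (a b M : R) :
  (forall x, Rmin a b <= x <= Rmax a b ->
     is_derive f x (f' x) /\ is_derive f' x (f'' x) /\ Rabs (f'' x) <= M) ->
  Rabs (f a - f b - (a - b) * f' b) <= M * (a - b) ^ 2.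
Proof.
  intros H.
  assert (Hseg : forall c, Rmin a b <= c <= Rmax a b ->
            forall x, Rmin c b <= x <= Rmax c b -> Rmin a b <= x <= Rmax a b).
  { intros c Hc x Hx. unfold Rmin, Rmax in *.
    repeat destruct Rle_dec; lra. }
  assert (Hf' : forall c, Rmin a b <= c <= Rmax a b ->
            Rabs (f' c - f' b) <= M * Rabs (c - b)).
  { intros c Hc. apply (MVT_Rabs_le f' f''). intros x Hx. apply H, (Hseg c Hc x Hx). }
  assert (HM : 0 <= M).
  { apply Rle_trans with (Rabs (f'' b)); [apply Rabs_pos|].
    apply H. unfold Rmin, Rmax; destruct Rle_dec; lra. }
  (* The mean value theorem for [f x - x f' b] bounds the remainder by
     [|f' c - f' b| |a - b|], and then once more by [M |a - b|^2]. *)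
  pose proof (MVT_Rabs_le (fun x => f x - x * f' b) (fun x => f' x - f' b) a b
                (M * Rabs (a - b))) as Hmvt.
  replace (f a - f b - (a - b) * f' b) with
    ((f a - a * f' b) - (f b - b * f' b)) by ring.
  replace (M * (a - b) ^ 2) with (M * Rabs (a - b) * Rabs (a - b))
    by (rewrite <- (pow2_abs (a - b)); ring).
  apply Hmvt. intros x Hx. split.
  - destruct (H x Hx) as [Hd _].
    auto_derive; [exists (f' x); exact Hd|].
    change (fun x => f x) with f. rewrite (is_derive_unique f x (f' x) Hd). ring.
  - eapply Rle_trans; [apply (Hf' x Hx)|].
    apply Rmult_le_compat_l; [exact HM|].
    unfold Rmin, Rmax in Hx. unfold Rabs. destruct Rle_dec; repeat destruct Rcase_abs; lra.
Qed.

Lemma Derive_eq_of_eq_on (D : R -> Prop) (f g : R -> R) (y : R) :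
  ex_derive f y -> ex_derive g y -> (forall x, D x -> f x = g x) -> D y ->
  (forall e, 0 < e -> exists x, D x /\ x <> y /\ Rabs (x - y) < e) ->
  Derive f y = Derive g y.
Proof.
  intros Hf Hg Heq Dy Hacc.
  pose proof (proj1 (is_derive_Reals _ _ _) (Derive_correct f y Hf)) as Lf.
  pose proof (proj1 (is_derive_Reals _ _ _) (Derive_correct g y Hg)) as Lg.
  destruct (Req_dec (Derive f y) (Derive g y)) as [E|NE]; auto. exfalso.
  (* both derivatives are limits of the same difference quotients along [D] *)
  set (e := Rabs (Derive f y - Derive g y) / 2).
  assert (He : 0 < e) by (apply Rdiv_lt_0_compat; [apply Rabs_pos_lt|]; lra).
  destruct (Lf e He) as [d1 Hd1]. destruct (Lg e He) as [d2 Hd2].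
  destruct (Hacc (Rmin d1 d2)) as [x [Dx [Hxy Hxd]]].
  { apply Rmin_pos; [apply (cond_pos d1)|apply (cond_pos d2)]. }
  pose proof (Rmin_l d1 d2). pose proof (Rmin_r d1 d2).
  specialize (Hd1 (x - y) ltac:(lra) ltac:(lra)).
  specialize (Hd2 (x - y) ltac:(lra) ltac:(lra)).
  replace (y + (x - y)) with x in * by ring.
  rewrite (Heq x Dx), (Heq y Dy) in Hd1.
  set (q := (g x - g y) / (x - y)) in *.
  pose proof (Rabs_triang (- (q - Derive f y)) (q - Derive g y)) as Htr.
  rewrite Rabs_Ropp in Htr.
  replace (- (q - Derive f y) + (q - Derive g y)) with (Derive f y - Derive g y) in Htr
    by ring.
  unfold e in *. lra.
Qed.

Lemma periodic_IZR {A : Type} (f : R -> A) (l : R) :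
  (forall x, f (x + l) = f x) -> forall (k : Z) x, f (x + IZR k * l) = f x.
Proof.
  intros H.
  assert (Hn : forall n x, f (x + INR n * l) = f x).
  { induction n as [|n IH]; intros x.
    - simpl. rewrite Rmult_0_l, Rplus_0_r. auto.
    - rewrite S_INR. replace (x + (INR n + 1) * l) with ((x + INR n * l) + l) by ring.
      rewrite H. auto. }
  intros k x. destruct (Z_le_gt_dec 0 k) as [Hk|Hk].
  - rewrite <- (Z2Nat.id k Hk), <- INR_IZR_INZ. apply Hn.
  - replace k with (- Z.of_nat (Z.to_nat (- k)))%Z by lia.
    rewrite opp_IZR, <- INR_IZR_INZ.
    rewrite <- (Hn (Z.to_nat (-k)) (x + - INR (Z.to_nat (- k)) * l)).
    f_equal; ring.
Qed.

Lemma exists_period_shift (x l : R) : 0 < l -> exists k : Z, 0 <= x - IZR k * l < l.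
Proof.
  intros Hl. destruct (archimed (x / l)) as [H1 H2].
  exists (up (x / l) - 1)%Z. rewrite minus_IZR.
  assert (x = (x / l) * l) by (field; lra).
  split; nra.
Qed.

Lemma Jdom_between (closed : bool) (l a b x : R) :
  Jdom closed l a -> Jdom closed l b -> Rmin a b <= x <= Rmax a b -> Jdom closed l x.
Proof. destruct closed; simpl; auto. unfold Rmin, Rmax. destruct Rle_dec; lra. Qed.

Lemma Jdom_has_nearby_points (closed : bool) (l y : R) : 0 < l -> Jdom closed l y ->
  forall e, 0 < e -> exists x, Jdom closed l x /\ x <> y /\ Rabs (x - y) < e.
Proof.
  intros Hl Hy e He. pose proof (Rmin_l (e/2) (l/2)). pose proof (Rmin_r (e/2) (l/2)).
  set (m := Rmin (e/2) (l/2)) in *. assert (0 < m) by (apply Rmin_pos; lra).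
  destruct closed; simpl in *.
  - exists (y + m). repeat split; try lra. rewrite Rabs_pos_eq; lra.
  - destruct (Rle_or_lt y 0).
    + exists (y + m). repeat split; try lra. rewrite Rabs_pos_eq; lra.
    + exists (y - m). repeat split; try lra. rewrite Rabs_left; lra.
Qed.

(** * Vectors of R^3 *)

Lemma vec3_ext (p q : vec3) : vx p = vx q -> vy p = vy q -> vz p = vz q -> p = q.
Proof.
  destruct p as [[a b] c], q as [[d e] f]. unfold vx, vy, vz; simpl.
  intros; subst; auto.
Qed.

Lemma dot_comm (p q : vec3) : dot p q = dot q p.
Proof. unfold dot; ring. Qed.

Lemma dot_self_ge0 (p : vec3) : 0 <= dot p p.
Proof. unfold dot. nra. Qed.

Lemma vnorm_ge0 (p : vec3) : 0 <= vnorm p.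
Proof. apply sqrt_pos. Qed.

Lemma vnorm_sqr (p : vec3) : vnorm p * vnorm p = dot p p.
Proof. apply sqrt_sqrt, dot_self_ge0. Qed.

Lemma Rabs_dot_le (p q : vec3) : Rabs (dot p q) <= vnorm p * vnorm q.
Proof.
  (* Lagrange's identity *)
  assert (E : dot p p * dot q q - (dot p q) ^ 2 =
      (vx p * vy q - vy p * vx q) ^ 2 + (vx p * vz q - vz p * vx q) ^ 2 +
      (vy p * vz q - vz p * vy q) ^ 2) by (unfold dot; ring).
  assert (H : (dot p q) ^ 2 <= dot p p * dot q q).
  { pose proof (pow2_ge_0 (vx p * vy q - vy p * vx q)).
    pose proof (pow2_ge_0 (vx p * vz q - vz p * vx q)).
    pose proof (pow2_ge_0 (vy p * vz q - vz p * vy q)). lra. }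
  rewrite <- (sqrt_pow2 (Rabs (dot p q))) by apply Rabs_pos.
  unfold vnorm. rewrite <- sqrt_mult by apply dot_self_ge0.
  apply sqrt_le_1_alt. rewrite pow2_abs. exact H.
Qed.

Lemma vnorm_le_coords (p : vec3) : vnorm p <= Rabs (vx p) + Rabs (vy p) + Rabs (vz p).
Proof.
  pose proof (Rabs_pos (vx p)); pose proof (Rabs_pos (vy p)); pose proof (Rabs_pos (vz p)).
  unfold vnorm, dot.
  rewrite <- (sqrt_pow2 (Rabs (vx p) + Rabs (vy p) + Rabs (vz p))) by lra.
  apply sqrt_le_1_alt.
  assert (Sq : forall x, x * x = Rabs x * Rabs x)
    by (intros x; rewrite <- Rabs_mult, Rabs_pos_eq; nra).
  rewrite (Sq (vx p)), (Sq (vy p)), (Sq (vz p)). nra.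
Qed.

Lemma vnorm_add_le (p q : vec3) : vnorm (vadd p q) <= vnorm p + vnorm q.
Proof.
  pose proof (Rabs_dot_le p q). pose proof (Rle_abs (dot p q)).
  pose proof (vnorm_sqr p). pose proof (vnorm_sqr q). pose proof (vnorm_sqr (vadd p q)).
  pose proof (vnorm_ge0 p). pose proof (vnorm_ge0 q). pose proof (vnorm_ge0 (vadd p q)).
  assert (dot (vadd p q) (vadd p q) = dot p p + 2 * dot p q + dot q q)
    by (unfold dot, vadd, mkv, vx, vy, vz; simpl; ring).
  nra.
Qed.

Lemma vnorm_scale (k : R) (p : vec3) : vnorm (vscale k p) = Rabs k * vnorm p.
Proof.
  unfold vnorm. rewrite <- sqrt_Rsqr_abs, <- sqrt_mult by (apply Rle_0_sqr || apply dot_self_ge0).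
  f_equal. unfold dot, vscale, mkv, vx, vy, vz, Rsqr; simpl. ring.
Qed.

Lemma vnorm_sub_triangle (p q r : vec3) :
  vnorm (vsub p r) <= vnorm (vsub p q) + vnorm (vsub q r).
Proof.
  replace (vsub p r) with (vadd (vsub p q) (vsub q r)); [apply vnorm_add_le|].
  apply vec3_ext; unfold vsub, vadd, vscale, mkv, vx, vy, vz; simpl; ring.
Qed.

Lemma vnorm_sub_eq0 (p q : vec3) : vnorm (vsub p q) = 0 -> p = q.
Proof.
  intros H. pose proof (vnorm_sqr (vsub p q)) as E. rewrite H in E.
  replace (dot (vsub p q) (vsub p q)) with
    ((vx p - vx q) * (vx p - vx q) + (vy p - vy q) * (vy p - vy q) +
     (vz p - vz q) * (vz p - vz q)) in E
    by (unfold dot, vsub, vadd, vscale, mkv, vx, vy, vz; simpl; ring).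
  pose proof (Rle_0_sqr (vx p - vx q)); pose proof (Rle_0_sqr (vy p - vy q));
    pose proof (Rle_0_sqr (vz p - vz q)); unfold Rsqr in *.
  apply vec3_ext; apply Rminus_diag_uniq, Rsqr_0_uniq; unfold Rsqr; lra.
Qed.

Lemma vadd_vscale_inj (p x y : vec3) (h : R) : h <> 0 ->
  vadd p (vscale h x) = vadd p (vscale h y) -> x = y.
Proof.
  intros Hh E.
  apply vec3_ext; apply (Rmult_eq_reg_l h); auto;
    [apply (f_equal vx) in E | apply (f_equal vy) in E | apply (f_equal vz) in E];
    unfold vadd, vscale, mkv, vx, vy, vz in *; simpl in *; lra.
Qed.

Lemma vsub_of_vadd_eq (p q X Y : vec3) (v w : R) :
  vadd p (vscale v X) = vadd q (vscale w Y) ->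
  vsub p q = vsub (vscale w Y) (vscale v X).
Proof.
  intros E.
  apply vec3_ext; [apply (f_equal vx) in E | apply (f_equal vy) in E | apply (f_equal vz) in E];
    unfold vsub, vadd, vscale, mkv, vx, vy, vz in *; simpl in *; lra.
Qed.

Lemma vnorm_vsub_vscale_le (X Y : vec3) (v w : R) :
  vnorm X = 1 -> vnorm Y = 1 -> vnorm (vsub (vscale w Y) (vscale v X)) <= Rabs w + Rabs v.
Proof.
  intros HX HY. unfold vsub.
  eapply Rle_trans; [apply vnorm_add_le|].
  rewrite !vnorm_scale, HX, HY, Rabs_m1. lra.
Qed.

Lemma sqr_of_Rabs_eq1 (o : R) : Rabs o = 1 -> o * o = 1.
Proof. intros H. change (o * o) with (Rsqr o). rewrite Rsqr_abs, H. apply Rmult_1_r. Qed.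

Lemma dot_frenet_combination_pos (g1 g2 : vec3) (o alpha beta : R) :
  dot g1 g2 = 0 -> 0 < vnorm g2 -> 0 < Rabs alpha < PI / 2 -> 0 < beta < PI ->
  0 < dot (vadd (vscale (cos beta) (vscale o g1))
             (vscale (sin beta)
                (vadd (vscale (cos alpha) (vscale (/ vnorm g2) g2))
                   (vscale (sin alpha) (cross (vscale o g1) (vscale (/ vnorm g2) g2))))))
          g2.
Proof.
  intros H12 Hg2 Ha Hb.
  assert (Hsin : 0 < sin beta) by (apply sin_gt_0; lra).
  assert (Hcos : 0 < cos alpha)
    by (apply cos_gt_0; unfold Rabs in Ha; destruct Rcase_abs in Ha; lra).
  replace (dot _ g2) with
    (cos beta * o * dot g1 g2 + sin beta * cos alpha * / vnorm g2 * dot g2 g2)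
    by (unfold dot, vadd, vscale, cross, mkv, vx, vy, vz; simpl; ring).
  rewrite H12, <- vnorm_sqr.
  replace (cos beta * o * 0 + sin beta * cos alpha * / vnorm g2 * (vnorm g2 * vnorm g2))
    with (sin beta * cos alpha * vnorm g2) by (field; lra).
  repeat apply Rmult_lt_0_compat; auto.
Qed.

(** * Curves in R^3 *)

Definition coords_derivable (c : R -> vec3) (t : R) : Prop :=
  ex_derive (fun s => vx (c s)) t /\ ex_derive (fun s => vy (c s)) t /\
  ex_derive (fun s => vz (c s)) t.

Lemma is_derive_dot (c d : R -> vec3) (t : R) :
  coords_derivable c t -> coords_derivable d t ->
  is_derive (fun s => dot (c s) (d s)) t (dot (Dv c t) (d t) + dot (c t) (Dv d t)).
Proof.
  intros [Cx [Cy Cz]] [Dx [Dy Dz]].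
  (* name the coordinate functions so that [auto_derive] treats them as atoms *)
  set (cx := fun s => vx (c s)). set (cy := fun s => vy (c s)).
  set (cz := fun s => vz (c s)). set (dx := fun s => vx (d s)).
  set (dy := fun s => vy (d s)). set (dz := fun s => vz (d s)).
  assert (Cx' : ex_derive cx t) by exact Cx. assert (Cy' : ex_derive cy t) by exact Cy.
  assert (Cz' : ex_derive cz t) by exact Cz. assert (Dx' : ex_derive dx t) by exact Dx.
  assert (Dy' : ex_derive dy t) by exact Dy. assert (Dz' : ex_derive dz t) by exact Dz.
  apply (is_derive_ext (fun s => cx s * dx s + cy s * dy s + cz s * dz s)); [reflexivity|].
  change (dot (Dv c t) (d t) + dot (c t) (Dv d t)) with
    (Derive cx t * dx t + Derive cy t * dy t + Derive cz t * dz t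
     + (cx t * Derive dx t + cy t * Derive dy t + cz t * Derive dz t)).
  clearbody cx cy cz dx dy dz. clear Cx Cy Cz Dx Dy Dz.
  auto_derive; [repeat split; auto|].
  change (fun x => ?f x) with f. ring.
Qed.

Lemma is_derive_dot_l (u : vec3) (c : R -> vec3) (t : R) :
  coords_derivable c t -> is_derive (fun s => dot u (c s)) t (dot u (Dv c t)).
Proof.
  intros Hc.
  assert (Hu : coords_derivable (fun _ => u) t) by (repeat split; apply ex_derive_const).
  replace (dot u (Dv c t)) with (dot (Dv (fun _ => u) t) (c t) + dot u (Dv c t)).
  - apply is_derive_dot; auto.
  - unfold Dv. rewrite !Derive_const. unfold dot, mkv, vx, vy, vz; simpl. ring.
Qed.

Lemma vnorm_continuity_pt (c : R -> vec3) (t : R) :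
  coords_derivable c t -> continuity_pt (fun s => vnorm (c s)) t.
Proof.
  intros Hc. unfold vnorm.
  apply (continuity_pt_comp (fun s => dot (c s) (c s)) sqrt t).
  - apply ex_derive_continuity_pt. eexists. apply is_derive_dot; auto.
  - apply continuity_pt_sqrt, dot_self_ge0.
Qed.

Lemma Dv_periodic (h : R -> vec3) (l : R) :
  (forall t, h (t + l) = h t) -> forall t, Dv h (t + l) = Dv h t.
Proof.
  intros H t. unfold Dv, Derive.
  f_equal; f_equal; apply Lim_ext; intros y;
    replace (t + l + y) with ((t + y) + l) by ring; rewrite !H; reflexivity.
Qed.

Lemma coords_derivable_ext_loc (X Y : R -> vec3) (s : R) :
  locally s (fun u => X u = Y u) -> coords_derivable X s -> coords_derivable Y s.
Proof.
  intros Hloc [Hx [Hy Hz]].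
  assert (Hc : forall pr : vec3 -> R, ex_derive (fun u => pr (X u)) s ->
                 ex_derive (fun u => pr (Y u)) s).
  { intros pr H. eapply ex_derive_ext_loc; [|exact H].
    eapply filter_imp; [|exact Hloc]. intros u ->. reflexivity. }
  repeat split; apply Hc; auto.
Qed.

Lemma coords_derivable_vsub (X Y : R -> vec3) (s : R) :
  coords_derivable X s -> coords_derivable Y s ->
  coords_derivable (fun u => vsub (X u) (Y u)) s.
Proof.
  intros [Xx [Xy Xz]] [Yx [Yy Yz]].
  repeat split; apply (ex_derive_plus (fun u => _ (X u)) (fun u => -1 * _ (Y u)));
    auto; apply ex_derive_scal; auto.
Qed.

Lemma coords_derivable_vscale (k : R) (h : R -> vec3) (y : R) :
  coords_derivable h y -> coords_derivable (fun u => vscale k (h u)) y.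
Proof. intros [Hx [Hy Hz]]. repeat split; apply ex_derive_scal; auto. Qed.

Lemma is_derive_affine_comp (g : R -> R) (s0 o y : R) : ex_derive g (s0 + o * y) ->
  is_derive (fun u => g (s0 + o * u)) y (o * Derive g (s0 + o * y)).
Proof. intros H. auto_derive; auto. change (fun x => g x) with g. ring. Qed.

Lemma coords_derivable_affine_comp (c : R -> vec3) (s0 o y : R) :
  coords_derivable c (s0 + o * y) -> coords_derivable (fun u => c (s0 + o * u)) y.
Proof.
  intros [Hx [Hy Hz]].
  repeat split; eexists; apply (is_derive_affine_comp (fun s => _ (c s))); eauto.
Qed.

Lemma Dv_affine_comp (c : R -> vec3) (s0 o y : R) : coords_derivable c (s0 + o * y) ->
  Dv (fun u => c (s0 + o * u)) y = vscale o (Dv c (s0 + o * y)).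
Proof.
  intros [Hx [Hy Hz]].
  apply vec3_ext; apply is_derive_unique;
    apply (is_derive_affine_comp (fun s => _ (c s))); auto.
Qed.

Lemma Dv_vscale (k : R) (h : R -> vec3) (y : R) :
  Dv (fun u => vscale k (h u)) y = vscale k (Dv h y).
Proof. apply vec3_ext; apply Derive_scal. Qed.

Lemma tang_coords_derivable (c : R -> vec3) (s : R) :
  coords_derivable (Dv c) s -> 0 < vnorm (Dv c s) -> coords_derivable (tang c) s.
Proof.
  intros Hc Hn.
  assert (Hinv : ex_derive (fun u => / vnorm (Dv c u)) s).
  { apply ex_derive_inv; [|lra]. unfold vnorm.
    eexists. apply is_derive_sqrt; [apply is_derive_dot; auto|].
    rewrite <- vnorm_sqr. nra. }
  destruct Hc as [Hx [Hy Hz]].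
  repeat split; apply ex_derive_mult; auto.
Qed.

Lemma Dv_eq_on_Jdom (closed : bool) (l : R) (c d : R -> vec3) (y : R) : 0 < l ->
  (forall x, Jdom closed l x -> c x = d x) -> Jdom closed l y ->
  coords_derivable c y -> coords_derivable d y -> Dv c y = Dv d y.
Proof.
  intros Hl Heq Jy [Cx [Cy Cz]] [Dx [Dy Dz]].
  assert (Hacc := Jdom_has_nearby_points closed l y Hl Jy).
  unfold Dv. f_equal;
    apply (Derive_eq_of_eq_on (Jdom closed l)); auto;
    intros x Jx; rewrite Heq; auto.
Qed.

Definition vcont (X : R -> vec3) (s : R) : Prop :=
  forall e, 0 < e -> exists d, 0 < d /\
    forall s', Rabs (s' - s) < d -> vnorm (vsub (X s') (X s)) < e.

Lemma vcont_of_coords_derivable (X : R -> vec3) (s : R) :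
  coords_derivable X s -> vcont X s.
Proof.
  intros [Cx [Cy Cz]] e He.
  apply ex_derive_continuity_pt in Cx, Cy, Cz.
  destruct (continuity_pt_eps _ _ Cx (e / 3)) as [d1 [Hd1 H1]]; [lra|].
  destruct (continuity_pt_eps _ _ Cy (e / 3)) as [d2 [Hd2 H2]]; [lra|].
  destruct (continuity_pt_eps _ _ Cz (e / 3)) as [d3 [Hd3 H3]]; [lra|].
  exists (Rmin d1 (Rmin d2 d3)). split; [repeat apply Rmin_pos; auto|].
  intros s' Hs'.
  pose proof (Rmin_l d1 (Rmin d2 d3)). pose proof (Rmin_r d1 (Rmin d2 d3)).
  pose proof (Rmin_l d2 d3). pose proof (Rmin_r d2 d3).
  specialize (H1 s' ltac:(lra)). specialize (H2 s' ltac:(lra)). specialize (H3 s' ltac:(lra)).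
  eapply Rle_lt_trans; [apply vnorm_le_coords|].
  replace (vx (vsub (X s') (X s))) with (vx (X s') - vx (X s))
    by (unfold vsub, vadd, vscale, mkv, vx; simpl; ring).
  replace (vy (vsub (X s') (X s))) with (vy (X s') - vy (X s))
    by (unfold vsub, vadd, vscale, mkv, vy; simpl; ring).
  replace (vz (vsub (X s') (X s))) with (vz (X s') - vz (X s))
    by (unfold vsub, vadd, vscale, mkv, vz; simpl; ring).
  lra.
Qed.

Lemma dot_ge_perturbed (X X' Y Y' : vec3) (e : R) :
  e <= 1 -> vnorm (vsub X' X) < e -> vnorm (vsub Y' Y) < e ->
  dot X Y - e * (vnorm X + vnorm Y + 1) <= dot X' Y'.
Proof.
  intros He1 HdX HdY.
  set (dX := vsub X' X) in *. set (dY := vsub Y' Y) in *.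
  assert (HY' : vnorm Y' <= vnorm Y + e).
  { replace Y' with (vadd Y dY)
      by (apply vec3_ext; unfold dY, vsub, vadd, vscale, mkv, vx, vy, vz; simpl; ring).
    pose proof (vnorm_add_le Y dY). lra. }
  assert (E : dot X' Y' = dot X Y + dot dX Y' + dot X dY)
    by (unfold dX, dY, dot, vsub, vadd, vscale, mkv, vx, vy, vz; simpl; ring).
  pose proof (Rabs_dot_le dX Y') as H1. pose proof (Rabs_dot_le X dY) as H2.
  pose proof (Rle_abs (- dot dX Y')). pose proof (Rle_abs (- dot X dY)).
  rewrite Rabs_Ropp in *.
  pose proof (vnorm_ge0 dX). pose proof (vnorm_ge0 X). pose proof (vnorm_ge0 Y').
  assert (vnorm dX * vnorm Y' <= e * (vnorm Y + 1)) by (apply Rmult_le_compat; lra).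
  assert (vnorm X * vnorm dY <= vnorm X * e) by (apply Rmult_le_compat_l; lra).
  nra.
Qed.

Lemma dot_pos_locally_uniform (X Y : R -> vec3) (A : R -> R) (s : R) :
  0 < dot (X s) (Y (A s)) -> vcont X s -> vcont Y (A s) ->
  (forall s', Rabs (A s' - A s) <= Rabs (s' - s)) ->
  exists r, 0 < r /\ exists rho, 0 < rho /\ forall s', Rabs (s' - s) < r ->
    forall b, Rabs (b - A s') < rho -> rho <= dot (X s') (Y b).
Proof.
  intros Hp HX HY HA.
  set (p := dot (X s) (Y (A s))) in *.
  set (K := vnorm (X s) + vnorm (Y (A s)) + 1).
  assert (HK : 1 <= K)
    by (unfold K; pose proof (vnorm_ge0 (X s)); pose proof (vnorm_ge0 (Y (A s))); lra).
  set (e := Rmin 1 (p / (2 * K))).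
  assert (He : 0 < e) by (apply Rmin_pos; [lra|apply Rdiv_lt_0_compat; lra]).
  assert (HeK : e * K <= p / 2).
  { assert (e <= p / (2 * K)) by apply Rmin_r.
    apply Rmult_le_compat_r with (r := K) in H; [|lra].
    replace (p / (2 * K) * K) with (p / 2) in H by (field; lra). lra. }
  destruct (HX e He) as [d1 [Hd1 H1]]. destruct (HY e He) as [d2 [Hd2 H2]].
  exists (Rmin d1 (d2 / 2)). split; [apply Rmin_pos; lra|].
  exists (Rmin (p / 2) (d2 / 2)). split; [apply Rmin_pos; lra|].
  intros s' Hs' b Hb.
  pose proof (Rmin_l d1 (d2 / 2)). pose proof (Rmin_r d1 (d2 / 2)).
  pose proof (Rmin_l (p / 2) (d2 / 2)). pose proof (Rmin_r (p / 2) (d2 / 2)).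
  assert (Hba : Rabs (b - A s) < d2).
  { pose proof (Rabs_triang (b - A s') (A s' - A s)) as Htr. pose proof (HA s').
    replace (b - A s' + (A s' - A s)) with (b - A s) in Htr by ring. lra. }
  pose proof (dot_ge_perturbed (X s) (X s') (Y (A s)) (Y b) e (Rmin_l 1 _)
                (H1 s' ltac:(lra)) (H2 b Hba)) as Hpert.
  fold p K in Hpert. lra.
Qed.

Lemma uniform_on_Jdom (closed : bool) (l : R) (P : R -> R -> Prop) : 0 < l ->
  (forall a r r', 0 < r' <= r -> P a r -> P a r') ->
  (closed = true -> forall (k : Z) a r, P a r -> P (a + IZR k * l) r) ->
  (forall a, Jdom closed l a -> exists r, 0 < r /\ exists rho, 0 < rho /\
      forall a', Rabs (a' - a) < r -> P a' rho) ->
  exists rho, 0 < rho /\ forall a, Jdom closed l a -> P a rho.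
Proof.
  intros Hl Hmon Hper Hloc.
  assert (Hloc' : forall lo hi, (forall a, lo <= a <= hi -> Jdom closed l a) ->
            forall a, lo <= a <= hi -> exists r, 0 < r /\ exists rho, 0 < rho /\
              forall a', lo <= a' <= hi -> Rabs (a' - a) < r -> P a' rho).
  { intros lo hi HJ a Ha. destruct (Hloc a (HJ a Ha)) as [r [Hr [rho [Hrho H]]]].
    exists r. split; auto. exists rho. split; auto. }
  destruct closed.
  - destruct (uniform_on_interval 0 l P Hmon) as [rho [Hrho Hunif]];
      [apply Hloc'; intros; exact I|].
    exists rho. split; auto. intros a _.
    destruct (exists_period_shift a l Hl) as [k Hk].
    replace a with ((a - IZR k * l) + IZR k * l) by ring.
    apply Hper, Hunif; auto; lra.
  - apply (uniform_on_interval (- (l / 2)) (l / 2) P Hmon), Hloc'. auto.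
Qed.

Lemma dot_pos_uniform_on_Jdom (closed : bool) (l : R) (X Y : R -> vec3) (s0 o : R) :
  0 < l -> (o = 1 \/ o = -1) ->
  (closed = true -> (forall t, X (t + l) = X t) /\ forall (k : Z) t, Y (t + IZR k * l) = Y t) ->
  (forall s, Jdom closed l s -> 0 < dot (X s) (Y (s0 + o * s))) ->
  (forall s, Jdom closed l s -> vcont X s) -> (forall b, vcont Y b) ->
  exists rho, 0 < rho /\ forall s, Jdom closed l s ->
    forall b, Rabs (b - (s0 + o * s)) < rho -> rho <= dot (X s) (Y b).
Proof.
  intros Hl Ho Hper Hpos HX HY.
  assert (HA : forall s s', Rabs (s0 + o * s' - (s0 + o * s)) <= Rabs (s' - s)).
  { intros s s'. replace (s0 + o * s' - (s0 + o * s)) with (o * (s' - s)) by ring.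
    rewrite Rabs_mult. destruct Ho as [-> | ->]; [rewrite Rabs_R1 | rewrite Rabs_m1]; lra. }
  apply uniform_on_Jdom; auto.
  - intros a r r' Hr H b Hb. specialize (H b ltac:(lra)). lra.
  - intros Hc k a r H b Hb. destruct (Hper Hc) as [HXp HYp].
    rewrite (periodic_IZR X l HXp).
    destruct Ho as [-> | ->].
    + replace (Y b) with (Y (b - IZR k * l))
        by (rewrite <- (HYp k (b - IZR k * l)); f_equal; ring).
      apply H. replace (b - IZR k * l - (s0 + 1 * a)) with (b - (s0 + 1 * (a + IZR k * l)))
        by ring. exact Hb.
    + replace (Y b) with (Y (b + IZR k * l))
        by (rewrite <- (HYp (- k)%Z (b + IZR k * l)), opp_IZR; f_equal; ring).
      apply H. replace (b + IZR k * l - (s0 + -1 * a)) with (b - (s0 + -1 * (a + IZR k * l)))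
        by ring. exact Hb.
  - intros s Js. apply (dot_pos_locally_uniform X Y (fun s => s0 + o * s) s (Hpos s Js)
                          (HX s Js) (HY _) (HA s)).
Qed.

(** * The curve C *)

Section UnitSpeedCurve.

Variables (closed : bool) (l : R) (gamma : R -> vec3).
Hypothesis Hemb : embedded_curve closed l gamma.

Lemma gamma_derivable (t : R) : coords_derivable gamma t.
Proof. destruct Hemb as [_ [H _]]. repeat split; apply (H 1%nat). Qed.

Lemma Dv_gamma_derivable (t : R) : coords_derivable (Dv gamma) t.
Proof. destruct Hemb as [_ [H _]]. repeat split; apply (H 2%nat). Qed.

Lemma Dv2_gamma_derivable (t : R) : coords_derivable (Dv (Dv gamma)) t.
Proof. destruct Hemb as [_ [H _]]. repeat split; apply (H 3%nat). Qed.

Lemma gamma_unit_speed (t : R) : vnorm (Dv gamma t) = 1.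
Proof. apply Hemb. Qed.

Lemma dot_Dv_gamma_self (t : R) : dot (Dv gamma t) (Dv gamma t) = 1.
Proof. rewrite <- vnorm_sqr, gamma_unit_speed. ring. Qed.

Lemma dot_Dv_Dv2_gamma (t : R) : dot (Dv gamma t) (Dv (Dv gamma) t) = 0.
Proof.
  (* differentiate [dot gamma' gamma' = 1] *)
  assert (H1 : is_derive (fun s => dot (Dv gamma s) (Dv gamma s)) t
                 (2 * dot (Dv gamma t) (Dv (Dv gamma) t))).
  { rewrite <- Rplus_diag, dot_comm at 1. apply is_derive_dot; apply Dv_gamma_derivable. }
  assert (H2 : is_derive (fun s => dot (Dv gamma s) (Dv gamma s)) t 0).
  { apply (is_derive_ext (fun _ => 1)); [|auto_derive; auto].
    intros s. symmetry. apply dot_Dv_gamma_self. }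
  pose proof (is_derive_unique _ _ _ H1) as U1.
  rewrite (is_derive_unique _ _ _ H2) in U1. lra.
Qed.

Lemma gamma_lipschitz (a b : R) : vnorm (vsub (gamma a) (gamma b)) <= Rabs (a - b).
Proof.
  set (u := vsub (gamma a) (gamma b)).
  assert (H : Rabs (dot u (gamma a) - dot u (gamma b)) <= vnorm u * Rabs (a - b)).
  { apply (MVT_Rabs_le (fun s => dot u (gamma s)) (fun s => dot u (Dv gamma s))).
    intros x _. split.
    - apply is_derive_dot_l, gamma_derivable.
    - eapply Rle_trans; [apply Rabs_dot_le|]. rewrite gamma_unit_speed. lra. }
  replace (dot u (gamma a) - dot u (gamma b)) with (vnorm u * vnorm u) in H
    by (rewrite vnorm_sqr; unfold u, dot, vsub, vadd, vscale, mkv, vx, vy, vz; simpl; ring).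
  rewrite Rabs_pos_eq in H by (apply Rmult_le_pos; apply vnorm_ge0).
  destruct (vnorm_ge0 u) as [Hu|Hu]; [|rewrite <- Hu; apply Rabs_pos].
  apply Rmult_le_reg_l with (vnorm u); auto.
Qed.

Lemma Dv2_gamma_periodic : closed = true ->
  forall (k : Z) t, Dv (Dv gamma) (t + IZR k * l) = Dv (Dv gamma) t.
Proof.
  intros Hc. apply periodic_IZR. destruct Hemb as [_ [_ [_ Hp]]]. rewrite Hc in Hp.
  apply Dv_periodic, Dv_periodic, Hp.
Qed.

Lemma Dv2_gamma_bounded :
  exists M, 0 < M /\ forall t, Jdom closed l t -> vnorm (Dv (Dv gamma) t) <= M.
Proof.
  set (phi := fun t => vnorm (Dv (Dv gamma) t)).
  assert (Hl : 0 < l) by apply Hemb.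
  assert (Hmax : forall lo hi, lo <= hi -> exists M, 0 < M /\
            forall t, lo <= t <= hi -> phi t <= M).
  { intros lo hi Hle.
    destruct (continuity_ab_maj phi lo hi Hle) as [t0 [H _]].
    { intros t _. apply vnorm_continuity_pt, Dv2_gamma_derivable. }
    exists (Rmax 1 (phi t0)). split; [pose proof (Rmax_l 1 (phi t0)); lra|].
    intros t Ht. eapply Rle_trans; [apply H, Ht | apply Rmax_r]. }
  pose proof Dv2_gamma_periodic as Hper.
  destruct closed.
  - destruct (Hmax 0 l) as [M [HM H]]; [lra|].
    exists M. split; auto. intros t _.
    destruct (exists_period_shift t l Hl) as [k Hk].
    replace t with ((t - IZR k * l) + IZR k * l) by ring.
    unfold phi in H. rewrite Hper by auto. apply H. lra.
  - destruct (Hmax (- (l / 2)) (l / 2)) as [M [HM H]]; [lra|].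
    exists M. split; auto.
Qed.

Section BoundedCurvature.

Variable M : R.
Hypothesis HM : forall t, Jdom closed l t -> vnorm (Dv (Dv gamma) t) <= M.

Lemma gamma_taylor (u : vec3) (a b : R) : Jdom closed l a -> Jdom closed l b ->
  Rabs (dot u (vsub (gamma a) (gamma b)) - (a - b) * dot u (Dv gamma b))
    <= vnorm u * M * (a - b) ^ 2.
Proof.
  intros Ja Jb.
  replace (dot u (vsub (gamma a) (gamma b))) with (dot u (gamma a) - dot u (gamma b))
    by (unfold dot, vsub, vadd, vscale, mkv, vx, vy, vz; simpl; ring).
  apply (taylor1_Rabs_le (fun s => dot u (gamma s)) (fun s => dot u (Dv gamma s))
           (fun s => dot u (Dv (Dv gamma) s))).
  intros x Hx. split; [|split].
  - apply is_derive_dot_l, gamma_derivable.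
  - apply is_derive_dot_l, Dv_gamma_derivable.
  - eapply Rle_trans; [apply Rabs_dot_le|].
    apply Rmult_le_compat_l; [apply vnorm_ge0|]. apply HM, (Jdom_between _ _ a b); auto.
Qed.

(* Project the meeting condition on [gamma''(b)]: the rulings contribute at least
   [m (v - w)], the curve only [O((a - b)^2)] since [gamma'(b)] is orthogonal to it. *)
Lemma crossing_rulings_bound (a b v w m : R) (X Y : vec3) :
  Jdom closed l a -> Jdom closed l b -> 0 < v -> w <= 0 ->
  vnorm X = 1 -> vnorm Y = 1 ->
  Rabs (a - b) <= 2 * vnorm (vsub (gamma a) (gamma b)) ->
  vadd (gamma a) (vscale v X) = vadd (gamma b) (vscale w Y) ->
  m <= dot X (Dv (Dv gamma) b) -> m <= dot Y (Dv (Dv gamma) b) ->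
  m <= 4 * (M * M) * (v - w).
Proof.
  intros Ja Jb Hv Hw HX HY Hbilip Hmeet HmX HmY.
  set (g2 := Dv (Dv gamma) b) in *.
  pose proof (vsub_of_vadd_eq _ _ _ _ _ _ Hmeet) as E.
  pose proof (vnorm_vsub_vscale_le X Y v w HX HY) as Hdist.
  rewrite <- E, Rabs_left1, Rabs_pos_eq in Hdist by lra.
  pose proof (gamma_taylor g2 a b Ja Jb) as T.
  rewrite (dot_comm g2 (Dv gamma b)), dot_Dv_Dv2_gamma, Rmult_0_r, Rminus_0_r,
    E in T.
  assert (Hdot : dot g2 (vsub (vscale w Y) (vscale v X)) <= - (m * (v - w))).
  { replace (dot g2 (vsub (vscale w Y) (vscale v X))) with (w * dot Y g2 - v * dot X g2)
      by (unfold dot, vsub, vadd, vscale, mkv, vx, vy, vz; simpl; ring).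
    fold g2 in HmX, HmY. nra. }
  assert (Hg2 : vnorm g2 <= M) by apply (HM b Jb).
  pose proof (vnorm_ge0 g2).
  assert (Hd2 : (a - b) ^ 2 <= 4 * (v - w) ^ 2).
  { rewrite <- (pow2_abs (a - b)). pose proof (Rabs_pos (a - b)). nra. }
  pose proof (Rle_abs (- dot g2 (vsub (vscale w Y) (vscale v X)))). rewrite Rabs_Ropp in H0.
  assert (vnorm g2 * M * (a - b) ^ 2 <= M * M * (4 * (v - w) ^ 2)).
  { assert (0 <= M) by lra.
    apply Rmult_le_compat; [nra | apply pow2_ge_0 | nra | exact Hd2]. }
  apply Rmult_le_reg_r with (v - w); [lra|]. nra.
Qed.

End BoundedCurvature.

Lemma gamma_locally_bilipschitz : exists r, 0 < r /\
  forall a b, Jdom closed l a -> Jdom closed l b -> Rabs (a - b) < r ->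
    Rabs (a - b) <= 2 * vnorm (vsub (gamma a) (gamma b)).
Proof.
  destruct Dv2_gamma_bounded as [M [HM0 HM]].
  exists (/ (2 * M)). split; [apply Rinv_0_lt_compat; lra|].
  intros a b Ja Jb Hab.
  pose proof (gamma_taylor M HM (Dv gamma b) a b Ja Jb) as T.
  pose proof (Rabs_dot_le (Dv gamma b) (vsub (gamma a) (gamma b))) as CS.
  rewrite dot_Dv_gamma_self, gamma_unit_speed, Rmult_1_r, Rmult_1_l in T.
  rewrite gamma_unit_speed in CS.
  set (x := dot (Dv gamma b) (vsub (gamma a) (gamma b))) in *.
  set (d := a - b) in *.
  assert (Hsmall : M * d ^ 2 <= Rabs d / 2).
  { rewrite <- (pow2_abs d). pose proof (Rabs_pos d).
    assert (M * Rabs d <= / 2).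
    { apply Rmult_lt_compat_l with (r := M) in Hab; [|lra].
      replace (M * / (2 * M)) with (/ 2) in Hab by (field; lra). lra. }
    nra. }
  pose proof (Rabs_triang (d - x) x). rewrite Rabs_minus_sym in H.
  replace (d - x + x) with d in H by ring. lra.
Qed.

Lemma curvature_unit_speed (t : R) : curvature gamma t = vnorm (Dv (Dv gamma) t).
Proof.
  assert (E : tang gamma = Dv gamma).
  { extensionality s. unfold tang. rewrite gamma_unit_speed, Rinv_1.
    apply vec3_ext; unfold vscale, mkv, vx, vy, vz; simpl; ring. }
  unfold curvature. rewrite E, gamma_unit_speed. field.
Qed.

Lemma gamma_dist_lower_bound (a p q : R) :
  (forall b, p <= b <= q -> gamma a <> gamma b) ->
  exists rho, 0 < rho /\ forall a' b, Rabs (a' - a) < rho -> p <= b <= q ->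
    rho <= vnorm (vsub (gamma a') (gamma b)).
Proof.
  intros Hne.
  destruct (uniform_on_interval p q (fun b rho => rho <= vnorm (vsub (gamma a) (gamma b))))
    as [rho [Hrho Hunif]].
  - intros; lra.
  - intros b Hb. set (d := vnorm (vsub (gamma a) (gamma b))).
    assert (Hd : 0 < d).
    { destruct (vnorm_ge0 (vsub (gamma a) (gamma b))) as [H|H]; auto.
      exfalso. apply (Hne b Hb), vnorm_sub_eq0. auto. }
    exists (d / 2). split; [lra|]. exists (d / 2). split; [lra|].
    intros b' _ Hr.
    pose proof (vnorm_sub_triangle (gamma a) (gamma b') (gamma b)).
    pose proof (gamma_lipschitz b' b). fold d in H. lra.
  - exists (rho / 2). split; [lra|]. intros a' b Ha' Hb.
    pose proof (vnorm_sub_triangle (gamma a) (gamma a') (gamma b)).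
    pose proof (gamma_lipschitz a a') as Lip. rewrite Rabs_minus_sym in Lip.
    pose proof (Hunif b Hb). lra.
Qed.

Lemma tang_gamma_affine (s0 o y : R) : Rabs o = 1 ->
  tang (fun u => gamma (s0 + o * u)) y = vscale o (Dv gamma (s0 + o * y)).
Proof.
  intros Ho. unfold tang. rewrite Dv_affine_comp by apply gamma_derivable.
  rewrite vnorm_scale, Ho, gamma_unit_speed, Rmult_1_l, Rinv_1.
  apply vec3_ext; unfold vscale, mkv, vx, vy, vz; simpl; ring.
Qed.

Lemma Dv_tang_gamma_affine (s0 o y : R) : Rabs o = 1 ->
  Dv (tang (fun u => gamma (s0 + o * u))) y = Dv (Dv gamma) (s0 + o * y).
Proof.
  intros Ho.
  rewrite (functional_extensionality _ _ (fun u => tang_gamma_affine s0 o u Ho)).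
  rewrite Dv_vscale, Dv_affine_comp by apply Dv_gamma_derivable.
  pose proof (sqr_of_Rabs_eq1 o Ho).
  apply vec3_ext; unfold vscale, mkv, vx, vy, vz; simpl; rewrite <- Rmult_assoc, H; ring.
Qed.

(* The ruling of a strip in [D(C)] or [D(-C)] leans towards the principal normal
   of [C], because [cos alpha > 0] and [sin beta > 0]. *)
Lemma ruling_dot_Dv2_gamma_pos (c : R -> vec3) (xi : vec3) (s0 o s alpha beta : R) :
  Rabs o = 1 ->
  (forall x, Jdom closed l x -> c x = gamma (s0 + o * x)) ->
  (forall x, Jdom closed l x -> coords_derivable c x) ->
  coords_derivable (Dv c) s -> Jdom closed l s ->
  0 < vnorm (Dv (Dv gamma) (s0 + o * s)) ->
  xi = vadd (vscale (cos beta) (tang c s))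
         (vscale (sin beta) (vadd (vscale (cos alpha) (nrm c s))
                                  (vscale (sin alpha) (binrm c s)))) ->
  0 < Rabs alpha < PI / 2 -> 0 < beta < PI ->
  0 < dot xi (Dv (Dv gamma) (s0 + o * s)).
Proof.
  intros Ho Hc Hcd Hdc Js Hg2 -> Ha Hb.
  pose proof (proj1 Hemb) as Hl.
  set (ct := fun u => gamma (s0 + o * u)).
  assert (Hct : forall y, coords_derivable ct y)
    by (intros y; apply coords_derivable_affine_comp, gamma_derivable).
  assert (E1 : forall y, Jdom closed l y -> Dv c y = Dv ct y)
    by (intros y Jy; apply (Dv_eq_on_Jdom closed l); auto).
  assert (E2 : forall y, Jdom closed l y -> tang c y = tang ct y)
    by (intros y Jy; unfold tang; rewrite E1; auto).
  assert (Hn : vnorm (Dv c s) = 1).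
  { rewrite E1 by auto. unfold ct.
    rewrite Dv_affine_comp by apply gamma_derivable.
    rewrite vnorm_scale, Ho, gamma_unit_speed. ring. }
  assert (E3 : Dv (tang c) s = Dv (Dv gamma) (s0 + o * s)).
  { rewrite <- (Dv_tang_gamma_affine s0 o s Ho).
    apply (Dv_eq_on_Jdom closed l); auto; [apply tang_coords_derivable; auto; lra|].
    rewrite (functional_extensionality _ _ (fun u => tang_gamma_affine s0 o u Ho)).
    apply coords_derivable_vscale, coords_derivable_affine_comp,
      Dv_gamma_derivable. }
  assert (T : tang c s = vscale o (Dv gamma (s0 + o * s)))
    by (rewrite E2; auto; apply tang_gamma_affine; auto).
  unfold binrm, nrm. rewrite T, E3.
  apply dot_frenet_combination_pos; auto. apply dot_Dv_Dv2_gamma.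
Qed.

End UnitSpeedCurve.

Lemma gamma_separated_open (l : R) (gamma : R -> vec3) :
  embedded_curve false l gamma -> forall delta, 0 < delta ->
  exists rho, 0 < rho /\ forall a, Jdom false l a -> forall b, Jdom false l b ->
    delta <= Rabs (a - b) -> rho <= vnorm (vsub (gamma a) (gamma b)).
Proof.
  intros Hemb delta Hdel.
  pose proof Hemb as [Hl [_ [_ Hinj]]]. simpl in Hinj |- *.
  apply (uniform_on_interval (- (l / 2)) (l / 2)
    (fun a rho => forall b, - (l / 2) <= b <= l / 2 -> delta <= Rabs (a - b) ->
       rho <= vnorm (vsub (gamma a) (gamma b)))).
  { intros a r r' Hr H b Hb Hab. specialize (H b Hb Hab). lra. }
  intros a Ha.
  destruct (gamma_dist_lower_bound _ _ _ Hemb a (- (l / 2)) (a - delta / 2))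
    as [r1 [Hr1 H1]]; [intros b Hb E; apply Hinj in E; simpl; lra|].
  destruct (gamma_dist_lower_bound _ _ _ Hemb a (a + delta / 2) (l / 2))
    as [r2 [Hr2 H2]]; [intros b Hb E; apply Hinj in E; simpl; lra|].
  pose proof (Rmin_l r1 r2). pose proof (Rmin_r r1 r2).
  exists (Rmin (delta / 2) (Rmin r1 r2)). split; [repeat apply Rmin_pos; lra|].
  exists (Rmin r1 r2). split; [apply Rmin_pos; lra|].
  intros a' _ Ha' b Hb Hab.
  pose proof (Rmin_l (delta / 2) (Rmin r1 r2)). pose proof (Rmin_r (delta / 2) (Rmin r1 r2)).
  destruct (Rle_or_lt b (a - delta / 2)).
  - apply Rle_trans with r1; [lra|]. apply H1; lra.
  - apply Rle_trans with r2; [lra|]. apply H2; [lra|].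
    unfold Rabs in *; repeat destruct Rcase_abs; lra.
Qed.

Lemma gamma_separated_closed (l : R) (gamma : R -> vec3) :
  embedded_curve true l gamma -> forall delta, 0 < delta ->
  exists rho, 0 < rho /\ forall a, 0 <= a <= l -> forall b, a + delta <= b <= a + l - delta ->
    rho <= vnorm (vsub (gamma a) (gamma b)).
Proof.
  intros Hemb delta Hdel.
  pose proof Hemb as [Hl [_ [_ [Hp Hinj]]]].
  assert (Hrep : forall x, 0 <= x < 2 * l ->
            exists x', 0 <= x' < l /\ gamma x' = gamma x /\ (x' = x \/ x' = x - l)).
  { intros x Hx. destruct (Rlt_or_le x l).
    - exists x; repeat split; auto; lra.
    - exists (x - l). split; [lra|]. split; [|right; lra].
      rewrite <- Hp. f_equal; ring. }
  apply (uniform_on_interval 0 l (fun a rho => forall b, a + delta <= b <= a + l - delta ->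
         rho <= vnorm (vsub (gamma a) (gamma b)))).
  { intros a r r' Hr H b Hb. specialize (H b Hb). lra. }
  intros a Ha.
  destruct (gamma_dist_lower_bound _ _ _ Hemb a (a + delta / 2) (a + l - delta / 2))
    as [r1 [Hr1 H1]].
  { intros b Hb E.
    destruct (Hrep a) as [a' [Ha' [Ea Ca]]]; [lra|].
    destruct (Hrep b) as [b' [Hb' [Eb Cb]]]; [lra|].
    assert (a' = b') by (apply Hinj; auto; congruence). lra. }
  exists (Rmin (delta / 2) r1). split; [apply Rmin_pos; lra|].
  exists r1. split; [lra|].
  intros a' _ Ha' b Hb.
  pose proof (Rmin_l (delta / 2) r1). pose proof (Rmin_r (delta / 2) r1).
  apply H1; [lra|]. unfold Rabs in Ha'; destruct Rcase_abs; lra.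
Qed.

Lemma gamma_params_close_open (l : R) (gamma : R -> vec3) :
  embedded_curve false l gamma ->
  forall delta, 0 < delta -> exists rho, 0 < rho /\ forall a b,
    Jdom false l a -> Jdom false l b -> vnorm (vsub (gamma a) (gamma b)) < rho ->
    Rabs (a - b) < delta.
Proof.
  intros Hemb delta Hdel.
  destruct (gamma_separated_open l gamma Hemb delta Hdel) as [rho [Hrho Hsep]].
  exists rho. split; auto. intros a b Ja Jb Hn.
  destruct (Rlt_or_le (Rabs (a - b)) delta) as [H|H]; auto.
  specialize (Hsep a Ja b Jb H). lra.
Qed.

Lemma gamma_params_close_closed (l : R) (gamma : R -> vec3) :
  embedded_curve true l gamma ->
  forall delta, 0 < delta -> exists rho, 0 < rho /\ forall a b,
    vnorm (vsub (gamma a) (gamma b)) < rho ->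
    exists k : Z, Rabs (a - (b + IZR k * l)) < delta.
Proof.
  intros Hemb delta Hdel.
  pose proof Hemb as [Hl [_ [_ [Hp _]]]].
  destruct (gamma_separated_closed l gamma Hemb delta Hdel) as [rho [Hrho Hsep]].
  exists rho. split; auto. intros a b Hn.
  pose proof (periodic_IZR gamma l Hp) as Pg.
  destruct (exists_period_shift a l Hl) as [ka Hka]. set (a0 := a - IZR ka * l) in *.
  destruct (exists_period_shift (b - a0) l Hl) as [kb Hkb]. set (b0 := b - IZR kb * l).
  assert (Ea : gamma a = gamma a0)
    by (replace a with (a0 + IZR ka * l) at 1 by (unfold a0; ring); apply Pg).
  assert (Eb : gamma b = gamma b0)
    by (replace b with (b0 + IZR kb * l) at 1 by (unfold b0; ring); apply Pg).
  rewrite Ea, Eb in Hn.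
  destruct (Rlt_or_le b0 (a0 + delta)).
  - exists (ka - kb)%Z. rewrite minus_IZR. unfold b0, a0 in *.
    unfold Rabs; destruct Rcase_abs; lra.
  - destruct (Rle_or_lt b0 (a0 + l - delta)).
    + exfalso. specialize (Hsep a0 ltac:(lra) b0 ltac:(lra)). lra.
    + exists (ka - kb - 1)%Z. rewrite !minus_IZR. unfold b0, a0 in *.
      unfold Rabs; destruct Rcase_abs; lra.
Qed.

Lemma gamma_params_close (closed : bool) (l : R) (gamma : R -> vec3) :
  embedded_curve closed l gamma ->
  forall delta, 0 < delta -> exists rho, 0 < rho /\ forall a b,
    Jdom closed l a -> Jdom closed l b -> vnorm (vsub (gamma a) (gamma b)) < rho ->
    exists b', Jdom closed l b' /\ gamma b' = gamma b /\
      Dv (Dv gamma) b' = Dv (Dv gamma) b /\ Rabs (a - b') < delta.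
Proof.
  intros Hemb delta Hd.
  pose proof (Dv2_gamma_periodic _ _ _ Hemb) as Hper2.
  destruct closed.
  - destruct (gamma_params_close_closed l gamma Hemb delta Hd) as [rho [Hrho H]].
    exists rho. split; auto. intros a b _ _ Hn.
    destruct (H a b Hn) as [k Hk]. exists (b + IZR k * l).
    split; [exact I|]. split; [|split; auto].
    apply periodic_IZR, Hemb.
  - destruct (gamma_params_close_open l gamma Hemb delta Hd) as [rho [Hrho H]].
    exists rho. split; auto. intros a b Ja Jb Hn. exists b. auto.
Qed.

(** * Developable strips *)

Lemma smooth2_scalar_derivable (U : R -> R -> Prop) (g : R -> R -> R) (u v : R) :
  smooth2_scalar U g -> U u v ->
  ex_derive (fun t => g t v) u /\ ex_derive (fun t => Derive (fun t' => g t' v) t) u.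
Proof.
  intros H Huv. exact (conj (proj1 (H nil u v Huv)) (proj1 (H (cons true nil) u v Huv))).
Qed.

Section DevelopableStrip.

Variables (closed : bool) (l : R) (F : R -> R -> vec3) (xi : R -> vec3).
Hypothesis Hstrip : dev_strip closed l F xi.

Lemma dev_strip_ruled : exists d, 0 < d /\ forall s v, Jdom closed l s -> Rabs v < d ->
  F s v = vadd (F s 0) (vscale v (xi s)) /\ vnorm (xi s) = 1.
Proof.
  destruct Hstrip as [eta [delta [Heta [Hdelta Hs]]]]. cbv zeta in Hs.
  destruct Hs as [_ [_ [_ [_ [_ [Hrep [Hunit _]]]]]]].
  exists delta. split; auto. intros s v Js Hv.
  assert (HU : (if closed then True else - (l / 2) - eta < s < l / 2 + eta) /\
               - delta < v < delta).
  { split; [destruct closed; simpl in *; auto; lra|].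
    unfold Rabs in Hv; destruct Rcase_abs in Hv; lra. }
  split; [apply Hrep, HU | apply (Hunit s v HU)].
Qed.

Lemma dev_strip_base_derivable (s : R) : Jdom closed l s ->
  coords_derivable (fun u => F u 0) s /\ coords_derivable (Dv (fun u => F u 0)) s.
Proof.
  intros Js.
  destruct Hstrip as [eta [delta [Heta [Hdelta Hs]]]]. cbv zeta in Hs.
  destruct Hs as [[Smx [Smy Smz]] _].
  assert (HU : (if closed then True else - (l / 2) - eta < s < l / 2 + eta) /\
               - delta < 0 < delta)
    by (split; [destruct closed; simpl in *; auto|]; lra).
  destruct (smooth2_scalar_derivable _ _ _ _ Smx HU) as [Dx D2x].
  destruct (smooth2_scalar_derivable _ _ _ _ Smy HU) as [Dy D2y].
  destruct (smooth2_scalar_derivable _ _ _ _ Smz HU) as [Dz D2z].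
  repeat split; assumption.
Qed.

Lemma dev_strip_ruling_derivable (s : R) : Jdom closed l s -> coords_derivable xi s.
Proof.
  intros Js.
  destruct Hstrip as [eta [delta [Heta [Hdelta Hs]]]]. cbv zeta in Hs.
  destruct Hs as [[Smx [Smy Smz]] [_ [_ [_ [_ [Hrep _]]]]]].
  set (v0 := delta / 2).
  assert (HU : forall u v, Rabs (u - s) < eta -> - delta < v < delta ->
    (if closed then True else - (l / 2) - eta < u < l / 2 + eta) /\ - delta < v < delta).
  { intros u v Hu Hv. split; auto. destruct closed; simpl in *; auto.
    unfold Rabs in Hu; destruct Rcase_abs in Hu; lra. }
  assert (Hs0 : Rabs (s - s) < eta) by (rewrite Rminus_diag, Rabs_R0; lra).
  assert (Hxi : locally s (fun u => vscale (/ v0) (vsub (F u v0) (F u 0)) = xi u)).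
  { exists (mkposreal eta Heta). intros u Hu.
    rewrite (Hrep u v0) by (apply HU; [exact Hu | unfold v0; lra]).
    apply vec3_ext; unfold vsub, vadd, vscale, mkv, vx, vy, vz; simpl; unfold v0;
      field; lra. }
  assert (Hd : forall v, - delta < v < delta -> coords_derivable (fun u => F u v) s).
  { intros v Hv. pose proof (HU s v Hs0 Hv) as Hsv.
    repeat split; [apply (smooth2_scalar_derivable _ _ _ _ Smx Hsv)
                  |apply (smooth2_scalar_derivable _ _ _ _ Smy Hsv)
                  |apply (smooth2_scalar_derivable _ _ _ _ Smz Hsv)]. }
  apply (coords_derivable_ext_loc _ _ s Hxi), coords_derivable_vscale,
    coords_derivable_vsub; apply Hd; unfold v0; lra.
Qed.

Lemma dev_strip_ruling_periodic : closed = true -> forall t, xi (t + l) = xi t.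
Proof.
  intros Hc t.
  destruct Hstrip as [eta [delta [Heta [Hdelta Hs]]]]. cbv zeta in Hs.
  destruct Hs as [_ [Hper [_ [_ [_ [Hrep _]]]]]].
  assert (HU : forall u, (if closed then True else - (l / 2) - eta < u < l / 2 + eta) /\
                         - delta < delta / 2 < delta)
    by (intros u; rewrite Hc; split; [exact I | lra]).
  pose proof (Hrep t (delta / 2) (HU t)) as E1.
  pose proof (Hrep (t + l) (delta / 2) (HU (t + l))) as E2.
  rewrite (Hper Hc t), (Hper Hc t) in E2.
  apply (vadd_vscale_inj (F t 0) _ _ (delta / 2)); [lra|].
  rewrite <- E1, <- E2. reflexivity.
Qed.

End DevelopableStrip.

(* What the proof uses of a normal form in [D(|C|)]: [A s = s0 +- s] is the
   parameter on [gamma] of the foot of the ruling [xi s]. *)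
Definition transversally_ruled (closed : bool) (l : R) (gamma : R -> vec3)
    (F : R -> R -> vec3) (d m : R) : Prop :=
  exists (A : R -> R) (xi : R -> vec3), forall s, Jdom closed l s ->
    Jdom closed l (A s) /\ vnorm (xi s) = 1 /\
    (forall v, Rabs v < d -> F s v = vadd (gamma (A s)) (vscale v (xi s))) /\
    (forall b, Rabs (b - A s) < m -> m <= dot (xi s) (Dv (Dv gamma) b)).

Lemma normal_form_D_transversally_ruled (closed : bool) (l : R) (gamma : R -> vec3)
    (o : R) (F : R -> R -> vec3) :
  embedded_curve closed l gamma -> (forall s, Jdom closed l s -> curvature gamma s <> 0) ->
  (o = 1 \/ o = -1) -> normal_form_D closed l gamma o F ->
  exists d m, 0 < d /\ 0 < m /\ transversally_ruled closed l gamma F d m.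
Proof.
  intros Hemb Hcurv Ho [xi [Hstrip [[s0 [Hs0 HF0]] [alpha [beta Hframe]]]]].
  pose proof (proj1 Hemb) as Hl.
  assert (Ho1 : Rabs o = 1) by (destruct Ho as [-> | ->]; [apply Rabs_R1 | apply Rabs_m1]).
  assert (HJA : forall s, Jdom closed l s -> Jdom closed l (s0 + o * s)).
  { intros s. destruct closed; simpl; auto. rewrite Hs0 by auto.
    destruct Ho as [-> | ->]; lra. }
  assert (Hpos : forall s, Jdom closed l s -> 0 < dot (xi s) (Dv (Dv gamma) (s0 + o * s))).
  { intros s Js. destruct (Hframe s Js) as [Hxi [Ha Hb]].
    apply (ruling_dot_Dv2_gamma_pos closed l gamma Hemb (fun u => F u 0) (xi s) s0 o s
             (alpha s) (beta s)); auto.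
    - intros x Jx. apply (dev_strip_base_derivable _ _ _ _ Hstrip x Jx).
    - apply (dev_strip_base_derivable _ _ _ _ Hstrip s Js).
    - destruct (vnorm_ge0 (Dv (Dv gamma) (s0 + o * s))) as [H|H]; auto.
      exfalso. apply (Hcurv _ (HJA s Js)). rewrite (curvature_unit_speed _ _ _ Hemb). auto. }
  destruct (dot_pos_uniform_on_Jdom closed l xi (Dv (Dv gamma)) s0 o Hl Ho)
    as [m [Hm Hunif]]; auto.
  { intros Hc. split; [apply (dev_strip_ruling_periodic _ _ _ _ Hstrip Hc)|].
    apply (Dv2_gamma_periodic _ _ _ Hemb Hc). }
  { intros s Js.
    apply vcont_of_coords_derivable, (dev_strip_ruling_derivable _ _ _ _ Hstrip s Js). }
  { intros b. apply vcont_of_coords_derivable, (Dv2_gamma_derivable _ _ _ Hemb). }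
  destruct (dev_strip_ruled _ _ _ _ Hstrip) as [d [Hd Hruled]].
  exists d, m. split; auto. split; auto.
  exists (fun s => s0 + o * s), xi. intros s Js.
  split; auto. split; [apply (Hruled s 0 Js); rewrite Rabs_R0; lra|].
  split; [|intros b; apply Hunif; auto].
  intros v Hv. rewrite <- HF0 by auto. apply (Hruled s v Js Hv).
Qed.

Lemma normal_form_Dabs_transversally_ruled (closed : bool) (l : R) (gamma : R -> vec3)
    (F : R -> R -> vec3) :
  embedded_curve closed l gamma -> (forall s, Jdom closed l s -> curvature gamma s <> 0) ->
  normal_form_Dabs closed l gamma F ->
  exists d m, 0 < d /\ 0 < m /\ transversally_ruled closed l gamma F d m.
Proof.
  intros Hemb Hcurv [HF|HF];
    [apply (normal_form_D_transversally_ruled _ _ _ 1)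
    |apply (normal_form_D_transversally_ruled _ _ _ (-1))]; auto.
Qed.

Lemma transversally_ruled_mono (closed : bool) (l : R) (gamma : R -> vec3)
    (F : R -> R -> vec3) (d m d' m' : R) :
  d' <= d -> m' <= m -> transversally_ruled closed l gamma F d m ->
  transversally_ruled closed l gamma F d' m'.
Proof.
  intros Hd Hm [A [xi Ht]]. exists A, xi. intros s Js.
  destruct (Ht s Js) as [JA [Hu [Hr Htr]]]. split; auto. split; auto. split.
  - intros v Hv. apply Hr. lra.
  - intros b Hb. apply Rle_trans with m; [lra|]. apply Htr. lra.
Qed.

Lemma transversally_ruled_sides_disjoint (closed : bool) (l : R) (gamma : R -> vec3)
    (F G : R -> R -> vec3) (d m : R) :
  embedded_curve closed l gamma -> 0 < d -> 0 < m ->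
  transversally_ruled closed l gamma F d m -> transversally_ruled closed l gamma G d m ->
  exists eps0, 0 < eps0 /\ forall eps, 0 < eps < eps0 ->
    forall s v t w, Jdom closed l s -> 0 < v < eps -> Jdom closed l t -> - eps < w < 0 ->
      F s v <> G t w.
Proof.
  intros Hemb Hd Hm [AF [xiF HtF]] [AG [xiG HtG]].
  destruct (Dv2_gamma_bounded _ _ _ Hemb) as [M [HM0 HM]].
  destruct (gamma_locally_bilipschitz _ _ _ Hemb) as [rB [HrB Hbilip]].
  destruct (gamma_params_close _ _ _ Hemb (Rmin m rB)) as [rho [Hrho Hclose]];
    [apply Rmin_pos; auto|].
  pose proof (Rmin_l m rB) as Hm_rB. pose proof (Rmin_r m rB) as HrB_m.
  exists (Rmin d (Rmin (rho / 2) (m / (8 * (M * M))))).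
  split; [repeat apply Rmin_pos; try apply Rdiv_lt_0_compat; nra|].
  intros eps [Heps0 Heps] s v t w Js Hv Jt Hw Heq.
  apply Rmin_Rgt in Heps as [Hed [Herho HeM]%Rmin_Rgt].
  destruct (HtF s Js) as [JaF [HuF [HrF HtrF]]].
  destruct (HtG t Jt) as [JaG [HuG [HrG HtrG]]].
  rewrite HrF, HrG in Heq by (unfold Rabs; destruct Rcase_abs; lra).
  pose proof (vnorm_vsub_vscale_le _ _ v w HuF HuG) as Hdist.
  rewrite <- (vsub_of_vadd_eq _ _ _ _ _ _ Heq), Rabs_left, Rabs_pos_eq in Hdist by lra.
  destruct (Hclose (AF s) (AG t) JaF JaG) as [b [Jb [Eg [Eg2 Hab]]]]; [lra|].
  rewrite <- Eg in Heq.
  assert (Hbound : m <= 4 * (M * M) * (v - w)).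
  { apply (crossing_rulings_bound closed l gamma Hemb M HM (AF s) b v w m (xiF s) (xiG t));
      auto; try lra.
    - apply Hbilip; auto. lra.
    - apply HtrF. rewrite Rabs_minus_sym. lra.
    - rewrite Eg2. apply HtrG. rewrite Rminus_diag, Rabs_R0. lra. }
  apply Rmult_lt_compat_l with (r := 8 * (M * M)) in HeM; [|nra].
  replace (8 * (M * M) * (m / (8 * (M * M)))) with m in HeM by (field; lra).
  nra.
Qed.

Theorem proposition1p11 (closed : bool) (l : R) (gamma : R -> vec3)
  (F G : R -> R -> vec3) :
  embedded_curve closed l gamma ->
  (forall s, Jdom closed l s -> curvature gamma s <> 0) ->
  normal_form_Dabs closed l gamma F ->
  normal_form_Dabs closed l gamma G ->
  exists eps0 : R, 0 < eps0 /\
    forall eps : R, 0 < eps < eps0 ->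
      forall s v t w : R,
        Jdom closed l s -> 0 < v < eps ->
        Jdom closed l t -> - eps < w < 0 ->
        F s v <> G t w.
Proof.
  intros Hemb Hcurv HF HG.
  destruct (normal_form_Dabs_transversally_ruled _ _ _ _ Hemb Hcurv HF)
    as [dF [mF [HdF [HmF HtF]]]].
  destruct (normal_form_Dabs_transversally_ruled _ _ _ _ Hemb Hcurv HG)
    as [dG [mG [HdG [HmG HtG]]]].
  apply (transversally_ruled_sides_disjoint _ _ _ _ _ (Rmin dF dG) (Rmin mF mG) Hemb);
    try apply Rmin_pos; auto;
    eapply transversally_ruled_mono; eauto; apply Rmin_l || apply Rmin_r.
Qed.
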